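(* Let $n\ge2$, $\rho>0$ and $\varpi\in S^{n-1}$. Let ${}^tP(\tau,\xi) = -\tau^2 + \xi\cdot\xi - i\tau\,\xi\cdot\xi$ for $(\tau,\xi)\in\mathbb{C}\times\mathbb{C}^n$, $\widetilde{\zeta^o} = (i\rho^2, i\rho\varpi)$, ${}^tP_o(\zeta) = {}^tP(\zeta+\widetilde{\zeta^o})$ and $\widetilde N = (-1,0,\ldots,0)\in\mathbb{R}\times\mathbb{R}^n$. Let $\sigma(\zeta)$ be a solution of ${}^tP_o(\zeta+\sigma\widetilde N) = 0$, $\zeta = (\tau,\xi)\in\mathbb{C}\times\mathbb{C}^n$. If $\sigma$ is analytic and single-valued in a ball $B\subset\mathbb{C}\times\mathbb{C}^n$ with real center and radius $1$, then $\sup_{\zeta\in B}\operatorname{Im}\sigma(\zeta)\ge0$. *)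

From Stdlib Require Import Reals.
From Coquelicot Require Import Coquelicot.
From mathcomp Require Import ssreflect ssrbool eqtype ssrnat fintype bigop.

Set Implicit Arguments.
Unset Strict Implicit.
Open Scope R_scope.

(* bilinear (non-Hermitian) dot product  xi . eta = sum_j xi_j eta_j  on C^n *)
Definition cdot (n : nat) (xi eta : 'I_n -> C) : C :=
  \big[Cplus/RtoC 0]_(j < n) Cmult (xi j) (eta j).

Definition tP (n : nat) (tau : C) (xi : 'I_n -> C) : C :=
  Cplus (Cplus (Copp (Cmult tau tau)) (cdot xi xi))
        (Copp (Cmult (Cmult Ci tau) (cdot xi xi))).

Definition tPo (n : nat) (rho : R) (varpi : 'I_n -> R) (tau : C) (xi : 'I_n -> C) : C :=
  tP (Cplus tau (Cmult Ci (RtoC (rho * rho))))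
     (fun j => Cplus (xi j) (Cmult Ci (RtoC (rho * varpi j)))).

Definition in_sphere (n : nat) (varpi : 'I_n -> R) : Prop :=
  \big[Rplus/0]_(j < n) (varpi j * varpi j) = 1.

Definition cdist (n : nat) (tau : C) (xi : 'I_n -> C) (tau' : C) (xi' : 'I_n -> C) : R :=
  sqrt (Cmod (Cminus tau tau') ^ 2
        + \big[Rplus/0]_(j < n) (Cmod (Cminus (xi j) (xi' j)) ^ 2)).

Definition in_ball (n : nat) (c0 : R) (c : 'I_n -> R) (tau : C) (xi : 'I_n -> C) : Prop :=
  cdist tau xi (RtoC c0) (fun j => RtoC (c j)) < 1.

Definition C_differentiable_at (f : C -> C) (z : C) : Prop :=
  exists l : C, forall eps : R, 0 < eps -> exists delta : R, 0 < delta /\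
    forall h : C, h <> RtoC 0 -> Cmod h < delta ->
      Cmod (Cminus (Cdiv (Cminus (f (Cplus z h)) (f z)) h) l) < eps.

Definition upd (n : nat) (xi : 'I_n -> C) (j : 'I_n) (w : C) : 'I_n -> C :=
  fun k => if k == j then w else xi k.

(* Holomorphic (= analytic) on the ball B, in the sense of Osgood:
   continuous on B and complex differentiable in each variable separately. *)
Definition holomorphic_on_ball (n : nat) (c0 : R) (c : 'I_n -> R)
    (f : C -> ('I_n -> C) -> C) : Prop :=
  (forall tau xi, in_ball c0 c tau xi ->
     forall eps : R, 0 < eps -> exists delta : R, 0 < delta /\
       forall tau' xi', in_ball c0 c tau' xi' -> cdist tau xi tau' xi' < delta ->
         Cmod (Cminus (f tau' xi') (f tau xi)) < eps) /\
  (forall tau xi, in_ball c0 c tau xi ->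
     C_differentiable_at (fun t => f t xi) tau /\
     forall j : 'I_n, C_differentiable_at (fun w => f tau (upd xi j w)) (xi j)).

From Stdlib Require Import Reals Lra Psatz.
From Coquelicot Require Import Coquelicot.
From mathcomp Require Import ssreflect ssrbool eqtype ssrnat fintype bigop.
Set Implicit Arguments.
Unset Strict Implicit.
Open Scope R_scope.

(** Only the equation at the points [(c0 + i s, c)], [0 <= s < 1], of the ball is used.  At such a point put [Q = xi . xi] with
    [xi = c + i rho varpi], so that [Re Q = |c|^2 - rho^2 >= - rho^2].  A root [T] of
    [-T^2 + Q - i T Q = 0] satisfies [Q = T^2 / (1 - i T)]; writing [T = x + i y], the real
    part of the right-hand side is [(x^2 (1 - y) - y^2 (1 + y)) / |1 - i T|^2], which is
    below [- rho^2] as soon as [y > rho^2 + 1].  Hence [Im T <= rho^2 + 1], and for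
    [T = tau - sigma + i rho^2] this says [Im sigma >= s - 1].  Letting [s] tend to [1]
    gives the claim. *)

Lemma Re_cdot_imag_shift_ge n (rho : R) (varpi c : 'I_n -> R) :
  let xi := fun j => Cplus (RtoC (c j)) (Cmult Ci (RtoC (rho * varpi j))) in
  - (rho * rho) * \big[Rplus/0]_(j < n) (varpi j * varpi j) <= Re (cdot xi xi).
Proof.
rewrite /cdot /Re.
pose P (z : C) (A B : R) := fst z = A - rho * rho * B /\ 0 <= A.
set Q := \big[Cplus/RtoC 0]_(j < n) _.
suff [-> ?] : P Q (\big[Rplus/0]_(j < n) (c j * c j))
                  (\big[Rplus/0]_(j < n) (varpi j * varpi j)) by lra.
apply: (@big_ind3 C R R P) => [|z1 A1 B1 z2 A2 B2 [E1 ?] [E2 ?]|j _]; rewrite /P /=.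
- split; [ring | lra].
- split; [rewrite E1 E2; ring | lra].
- split; [ring | nra].
Qed.

Lemma tP_root_Im_le n (tau : C) (xi : 'I_n -> C) (r : R) :
  0 <= r -> - r <= Re (cdot xi xi) -> tP tau xi = RtoC 0 -> Im tau <= r + 1.
Proof.
rewrite /tP /Re /Im; case: (cdot xi xi) => a b; case: tau => x y /= Hr Ha E.
have Re_eq : - x * x + y * y + a + y * a + x * b = 0.
{ move/(f_equal fst): E => /=; lra. }
have Im_eq : - 2 * x * y + b + y * b - x * a = 0.
{ move/(f_equal snd): E => /=; lra. }
apply: Rnot_lt_le => Hy.
have Hb : b * (1 + y) = x * (2 * y + a) by lra.
have ReQ : a * ((1 + y) * (1 + y) + x * x) = x * x * (1 - y) - y * y * (1 + y).
{ have : (- x * x + y * y + a + y * a) * (1 + y) + x * (b * (1 + y)) = 0.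
  { by rewrite -(Rmult_0_l (1 + y)) -Re_eq; ring. }
  rewrite Hb; lra. }
have ReQ_ge : - r * ((1 + y) * (1 + y) + x * x) <= x * x * (1 - y) - y * y * (1 + y).
{ rewrite -ReQ; apply: Rmult_le_compat_r; nra. }
have : y * y * (1 + y) <= r * ((1 + y) * (1 + y)) by nra.
nra.
Qed.

Lemma cdist_same_xi n (tau tau' : C) (xi : 'I_n -> C) :
  cdist tau xi tau' xi = Cmod (Cminus tau tau').
Proof.
rewrite /cdist.
have -> : \big[Rplus/0]_(j < n) (Cmod (Cminus (xi j) (xi j)) ^ 2) = 0.
{ apply: (big_ind (fun x => x = 0)) => [//|_ _ -> ->|j _]; first ring.
  by rewrite /Cminus Cplus_opp_r Cmod_0; ring. }
by rewrite Rplus_0_r sqrt_pow2 //; apply: Cmod_ge_0.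
Qed.

Lemma in_ball_imag_shift n c0 (c : 'I_n -> R) (s : R) :
  0 <= s < 1 -> in_ball c0 c (c0, s) (fun j => RtoC (c j)).
Proof.
move=> [s_ge0 s_lt1]; rewrite /in_ball cdist_same_xi /Cmod /=.
have -> : (c0 + - c0) ^ 2 + (s + - 0) ^ 2 = s ^ 2 by ring.
by rewrite sqrt_pow2.
Qed.

Lemma Lub_Rbar_ge (E : R -> Prop) (m : R) :
  (forall eps, 0 < eps -> exists y, E y /\ m - eps < y) -> Rbar_le m (Lub_Rbar E).
Proof.
move=> approx; have [ub _] := Lub_Rbar_correct E.
case: (Lub_Rbar E) ub => [l| |] ub //=.
- apply: Rnot_lt_le => hl.
  have [y [Ey hy]] := approx (m - l) ltac:(lra).
  by have /= := ub y Ey; lra.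
- by have [y [Ey _]] := approx 1 Rlt_0_1; apply: ub y Ey.
Qed.

Theorem lemma2 (n : nat) (hn : (2 <= n)%N) (rho : R) (hrho : 0 < rho)
  (varpi : 'I_n -> R) (hvarpi : in_sphere varpi)
  (c0 : R) (c : 'I_n -> R) (sigma : C -> ('I_n -> C) -> C)
  (hhol : holomorphic_on_ball c0 c sigma)
  (hsol : forall tau xi, in_ball c0 c tau xi ->
            (* zeta + sigma * N~ = (tau - sigma, xi) *)
            tPo rho varpi (Cminus tau (sigma tau xi)) xi = RtoC 0) :
  Rbar_le (Rbar.Finite 0)
    (Lub_Rbar (fun y => exists tau xi, in_ball c0 c tau xi /\ y = Im (sigma tau xi))).
Proof.
have Im_sigma_ge s (hs : 0 <= s < 1) :
  s - 1 <= Im (sigma (c0, s) (fun j => RtoC (c j))).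
{ have ReQ := Re_cdot_imag_shift_ge rho varpi c.
  rewrite hvarpi Rmult_1_r in ReQ.
  have := tP_root_Im_le (Rle_0_sqr rho) ReQ (hsol _ _ (in_ball_imag_shift c0 c hs)).
  rewrite /Im /Rsqr /=; lra. }
apply: Lub_Rbar_ge => eps heps.
pose s := Rmax 0 (1 - eps / 2).
have hs : 0 <= s < 1 by split; [apply: Rmax_l | apply: Rmax_lub_lt; lra].
exists (Im (sigma (c0, s) (fun j => RtoC (c j)))); split.
- by exists (c0, s), (fun j => RtoC (c j)); split; first exact: in_ball_imag_shift.
- have := Im_sigma_ge s hs; have := Rmax_r 0 (1 - eps / 2); rewrite -/s; lra.
Qed.
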